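(* Let $E\in M_n(\mathbb{FT})$ be an idempotent of rank $n$, and let $H_E$ be its $\mathcal{H}$-class in $M_n(\mathbb{FT})$. Let $G_E$ be the set of all units $G$ of the monoid $M_n(\mathbb{T})$ which commute with $E$ (i.e. $G\otimes E=E\otimes G$). Then the map $G_E\to H_E$, $G\mapsto G\otimes E=E\otimes G$ is an isomorphism of groups.
   Context: $\mathbb{FT}$ is $\mathbb{R}$ with $a\oplus b=\max(a,b)$, $a\otimes b=a+b$; $\mathbb{T}=\mathbb{R}\cup\{-\infty\}$ with $a\oplus-\infty=a$ and $a\otimes-\infty=-\infty$. $M_n(\mathbb{FT})\subseteq M_n(\mathbb{T})$ are the sets of $n\times n$ matrices over these, under $(A\otimes B)_{i,j}=\bigoplus_k A_{i,k}\otimes B_{k,j}$; $M_n(\mathbb{T})$ is a monoid whose identity has $0$ on the diagonal and $-\infty$ elsewhere, and its units are exactly the matrices with exactly one entry different from $-\infty$ in each row and column. $C(E)$ is the subset of $\mathbb{FT}^n$ of all finite maxima of columns of $E$ shifted by real constants. The rank of an idempotent $E$ is the minimal cardinality of a generating set of $C(E)$ (as a set closed under componentwise max and adding a real constant to all coordinates). Green's relations on a semigroup $S$: $a\,\mathcal{R}\,b$ iff $aS^1=bS^1$, $a\,\mathcal{L}\,b$ iff $S^1a=S^1b$, $\mathcal{H}=\mathcal{L}\cap\mathcal{R}$; the $\mathcal H$-class of an idempotent is a group. *)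

From HB Require Import structures.
From mathcomp Require Import all_boot all_order all_algebra.
From mathcomp Require Import reals.
Set Implicit Arguments. Unset Strict Implicit. Unset Printing Implicit Defensive.
Import Order.TTheory GRing.Theory Num.Theory.
Local Open Scope ring_scope.

Section Tropical.
Variable R : realType.

(* T = R ∪ {-oo}, with None standing for -oo. *)
Definition trop := option R.

Definition tadd (a b : trop) : trop :=
  match a, b with
  | Some x, Some y => Some (Num.max x y)
  | None, _ => b
  | _, None => a
  end.

Definition tmul (a b : trop) : trop :=
  match a, b with
  | Some x, Some y => Some (x + y)
  | _, _ => None
  end.

Definition tmx_mul n (A B : 'M[trop]_n) : 'M[trop]_n :=
  \matrix_(i, j) \big[tadd/None]_(k < n) tmul (A i k) (B k j).

Definition tmx_id n : 'M[trop]_n :=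
  \matrix_(i, j) (if i == j then Some 0 else None).

Definition tmx_unit n (G : 'M[trop]_n) : Prop :=
  exists G', tmx_mul G G' = tmx_id n /\ tmx_mul G' G = tmx_id n.

(* M_n(FT) ⊆ M_n(T): matrices with all entries finite *)
Definition tmx_finite n (A : 'M[trop]_n) : Prop :=
  forall i j, A i j <> None.

Definition tmx_of n (E : 'M[R]_n) : 'M[trop]_n := map_mx (@Some R) E.

(* Green's relations in the subsemigroup S of M_n(T) (S^1 = S ∪ {1}) *)
Definition right_ideal n (S : 'M[trop]_n -> Prop) (a : 'M[trop]_n) (z : 'M[trop]_n) :=
  exists x, (S x \/ x = tmx_id n) /\ z = tmx_mul a x.
Definition left_ideal n (S : 'M[trop]_n -> Prop) (a : 'M[trop]_n) (z : 'M[trop]_n) :=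
  exists x, (S x \/ x = tmx_id n) /\ z = tmx_mul x a.
Definition greenR n (S : 'M[trop]_n -> Prop) a b :=
  forall z, right_ideal S a z <-> right_ideal S b z.
Definition greenL n (S : 'M[trop]_n -> Prop) a b :=
  forall z, left_ideal S a z <-> left_ideal S b z.
Definition greenH n (S : 'M[trop]_n -> Prop) a b := greenR S a b /\ greenL S a b.

Definition H_class n (E : 'M[trop]_n) (X : 'M[trop]_n) : Prop :=
  tmx_finite X /\ greenH (@tmx_finite n) X E.

Definition shiftv n (p : 'cV[R]_n * R) : 'cV[R]_n := \col_i (p.2 + p.1 i 0).
Definition vmax n (u w : 'cV[R]_n) : 'cV[R]_n := \col_i Num.max (u i 0) (w i 0).

Definition tspan n (P : 'cV[R]_n -> Prop) (v : 'cV[R]_n) : Prop :=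
  exists (p : 'cV[R]_n * R) (l : seq ('cV[R]_n * R)),
    P p.1 /\ (forall q, q \in l -> P q.1) /\
    v = foldr (fun q w => vmax (shiftv q) w) (shiftv p) l.

Definition colspace n (E : 'M[R]_n) : 'cV[R]_n -> Prop :=
  tspan (fun u => exists j, u = col j E).

Definition generates n (X : seq 'cV[R]_n) (C : 'cV[R]_n -> Prop) : Prop :=
  forall v, tspan (fun u => u \in X) v <-> C v.

Definition has_rank n (E : 'M[R]_n) (r : nat) : Prop :=
  (exists X : seq 'cV[R]_n, uniq X /\ size X = r /\ generates X (colspace E)) /\
  (forall X : seq 'cV[R]_n, generates X (colspace E) -> (r <= size (undup X))%N).

End Tropical.

(* A full-rank idempotent E has no redundant column: no column of E is a tropical
   combination of the others.  Hence E has zero diagonal (so 1 <= E in the tropical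
   order) and no two columns of E differ by a constant.  A unit K with E K = E then has
   unit diagonal, hence K = 1, which gives injectivity.  For X in H_E, the equations
   X Y = Y X = E, E X = X = X E force each column of E to reappear, shifted, as a
   column of X, i.e. X = E P for a monomial unit P; since 1 <= E, the identities
   E P E = E P and E P^-1 E = E P^-1 make P commute with E. *)

From HB Require Import structures.
From mathcomp Require Import all_boot all_order all_algebra all_fingroup.
From mathcomp Require Import reals.
From mathcomp Require Import lra.
Set Implicit Arguments. Unset Strict Implicit. Unset Printing Implicit Defensive.
Import Order.TTheory GRing.Theory Num.Theory.
Local Open Scope ring_scope.

Section AbsorbingUnit.
Variable A : pzSemiRingType.

Lemma commr_inv (g g' e : A) :
  g * g' = 1 -> g' * g = 1 -> g * e = e * g -> g' * e = e * g'.
Proof.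
move=> gg' g'g ge.
by rewrite -[g' * e]mulr1 -gg' mulrA -(mulrA g') -ge mulrA g'g mul1r.
Qed.

(* Read [x = y + x] as [y <= x]: from [1 <= e] one gets [p e <= e p e = e p], and the
   same bound for [q], conjugated by [p], gives [e p <= p e]. *)
Lemma commr_unit_absorb (e p q : A) :
  1 + e = e -> p * q = 1 -> q * p = 1 ->
  e * p * e = e * p -> e * q * e = e * q -> p * e = e * p.
Proof.
move=> e1 pq qp epe eqe.
have absorb u : e * u * e = e * u -> e * u = u * e + e * u.
  move=> eue; transitivity ((1 + e) * u * e); first by rewrite e1 eue.
  by rewrite !mulrDl mul1r eue.
have pe : p * e = e * p + p * e.
  transitivity (p * (e * q) * p); first by rewrite -!mulrA qp mulr1.
  by rewrite (absorb q eqe) mulrDr mulrDl !mulrA pq mul1r -!mulrA qp mulr1.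
by rewrite {1}pe addrC -absorb.
Qed.

End AbsorbingUnit.

Section TropicalSemiring.
Variable R : realType.
Local Notation T := (trop R).

Lemma taddA : associative (@tadd R).
Proof. by case=> [a|] [b|] [c|] //=; rewrite maxA. Qed.

Lemma taddC : commutative (@tadd R).
Proof. by case=> [a|] [b|] //=; rewrite maxC. Qed.

Lemma tadd0r : left_id None (@tadd R).
Proof. by case. Qed.

HB.instance Definition _ := Choice.on T.
HB.instance Definition _ := GRing.isNmodule.Build T taddA taddC tadd0r.

Lemma tmulA : associative (@tmul R).
Proof. by case=> [a|] [b|] [c|] //=; rewrite addrA. Qed.

Lemma tmulC : commutative (@tmul R).
Proof. by case=> [a|] [b|] //=; rewrite addrC. Qed.

Lemma tmul1r : left_id (Some 0) (@tmul R).
Proof. by case=> //= a; rewrite add0r. Qed.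

Lemma tmulDl : left_distributive (@tmul R) (@tadd R).
Proof. by case=> [a|] [b|] [c|] //=; rewrite addr_maxl. Qed.

Lemma tmul0r : left_zero (None : T) (@tmul R).
Proof. by []. Qed.

Lemma tone_neq0 : Some 0 != None :> T.
Proof. by []. Qed.

HB.instance Definition _ :=
  GRing.Nmodule_isComNzSemiRing.Build T tmulA tmulC tmul1r tmulDl tmul0r tone_neq0.

Lemma tmx_mulE n (A B : 'M[T]_n) : tmx_mul A B = A *m B.
Proof. by apply/matrixP => i j; rewrite !mxE. Qed.

Lemma tmx_idE n : tmx_id R n = 1%:M.
Proof. by apply/matrixP => i j; rewrite !mxE; case: eqP. Qed.

Lemma taddE (a b : R) : (Some a : T) + Some b = Some (Num.max a b).
Proof. by []. Qed.

Lemma tmulE (a b : R) : (Some a : T) * Some b = Some (a + b).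
Proof. by []. Qed.

Lemma taddP (a b : T) : a + b = a \/ a + b = b.
Proof.
case: a b => [a|] [b|]; auto; rewrite taddE.
by case: leP; [right | left].
Qed.

Lemma tadd_eq0 (a b : T) : a + b = 0 -> a = 0 /\ b = 0.
Proof. by case: a b => [a|] [b|]. Qed.

Lemma tmul_eq0 (a b : T) : a * b = 0 -> a = 0 \/ b = 0.
Proof. by case: a b => [a|] [b|]; auto. Qed.

Lemma trop_absorb (v : R) (c w : T) :
  Some v = (Some v : T) * c + w -> c != 1 -> w = Some v.
Proof.
case: c w => [c|] [w|] //=.
  rewrite tmulE taddE => + c0; case: leP => h [vE]; first by rewrite vE.
  have c_0 : c = 0 by lra.
  by rewrite c_0 eqxx in c0.
move=> [vE]; have c_0 : c = 0 by lra.
by rewrite c_0 eqxx.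
Qed.

Section TropicalSums.
Variables (I : finType) (F : I -> T).

Lemma sumT_eq0 i : \sum_j F j = 0 -> F i = 0.
Proof. by rewrite (bigD1 i) //= => /tadd_eq0 []. Qed.

Lemma sumT_neq0 : \sum_j F j != 0 -> exists i, F i != 0.
Proof.
case: (pickP (fun i => F i != 0)) => [i Fi _|F0]; first by exists i.
by rewrite big1 ?eqxx // => i _; apply/eqP/negbFE/F0.
Qed.

Lemma sumT_ub v i w : \sum_j F j = Some v -> F i = Some w -> w <= v.
Proof.
rewrite (bigD1 i) //= => + Fi; rewrite Fi.
by case: (\sum_(j | j != i) F j) => [u|] -[<-] //; rewrite le_max lexx.
Qed.

Lemma sumT_attained v : \sum_j F j = Some v -> exists i, F i = Some v.
Proof.
move=> Fv; suff [|[i Fi]] : \sum_j F j = 0 \/ exists i, F i = \sum_j F j.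
- by rewrite Fv.
- by exists i; rewrite Fi.
elim/big_ind: _ => [|x y IHx IHy|i _]; [by left | | by right; exists i].
by case: (taddP x y) => ->.
Qed.

End TropicalSums.

Lemma mulmx_entry_ub m n p (A : 'M[T]_(m, n)) (B : 'M[T]_(n, p)) i j k v w :
  (A *m B) i j = Some v -> A i k * B k j = Some w -> w <= v.
Proof. by rewrite mxE; apply: sumT_ub. Qed.

Section TropicalUnits.
Variable n : nat.

Lemma unit_row_nonzero (K K' : 'M[T]_n) i :
  K *m K' = 1%:M -> exists k, K i k != 0 /\ K' k i != 0.
Proof.
move/(congr1 (fun M : 'M[T]_n => M i i)); rewrite !mxE eqxx mulr1n => Kii.
have [k Kk] : exists k, K i k * K' k i != 0 by apply: sumT_neq0; rewrite Kii oner_eq0.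
by exists k; split; apply: contraNneq Kk => ->; rewrite ?mul0r ?mulr0.
Qed.

Lemma unit_col_uniq (K K' : 'M[T]_n) i m j :
  K *m K' = 1%:M -> K' *m K = 1%:M -> K i j != 0 -> K m j != 0 -> i = m.
Proof.
move=> KK' K'K Kij Kmj; case: (eqVneq i m) => // im; exfalso.
have K'j0 b : K' j b = 0.
  have [a ab Kaj] : exists2 a, a != b & K a j != 0.
    by case: (eqVneq i b) => [<-|]; [exists m; rewrite // eq_sym | exists i].
  move: (congr1 (fun M : 'M[T]_n => M a b) KK'); rewrite !mxE (negbTE ab) mulr0n.
  by move/(sumT_eq0 j)/tmul_eq0 => [Ka0|//]; rewrite Ka0 eqxx in Kaj.
move: (congr1 (fun M : 'M[T]_n => M j j) K'K); rewrite !mxE eqxx mulr1n big1 => [/eqP|k _].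
  by rewrite eq_sym oner_eq0.
by rewrite K'j0 mul0r.
Qed.

Lemma unit_mulmx_finite (G G' B : 'M[T]_n) : G *m G' = 1%:M -> G' *m G = 1%:M ->
  tmx_finite B -> tmx_finite (G *m B) /\ tmx_finite (B *m G).
Proof.
move=> GG' G'G Bf; split=> i j; rewrite mxE.
  have [k [Gik _]] := unit_row_nonzero i GG'.
  by move/(sumT_eq0 k)/tmul_eq0 => [/eqP|/Bf //]; rewrite (negbTE Gik).
have [k [_ Gkj]] := unit_row_nonzero j G'G.
by move/(sumT_eq0 k)/tmul_eq0 => [/Bf //|/eqP]; rewrite (negbTE Gkj).
Qed.

End TropicalUnits.

Lemma tmx_finiteP n (A : 'M[T]_n) : tmx_finite A -> exists M, A = tmx_of M.
Proof.
move=> Af; exists (\matrix_(i, j) odflt 0 (A i j)).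
by apply/matrixP => i j; rewrite !mxE; case: (A i j) (Af i j).
Qed.

Section TropicalPermMatrix.
Variable n : nat.

Definition tmx_perm (s : 'S_n) (a : 'I_n -> R) : 'M[T]_n :=
  \matrix_(i, j) if s i == j then Some (a i) else 0 : T.

Lemma mul_tmx_perm s a (A : 'M[T]_n) i j :
  (tmx_perm s a *m A) i j = (Some (a i) : T) * A (s i) j.
Proof.
rewrite mxE (bigD1 (s i)) //= big1 => [|k /negbTE ski]; first by rewrite mxE eqxx addr0.
by rewrite mxE eq_sym ski mul0r.
Qed.

Lemma mulmx_tmx_perm s a (A : 'M[T]_n) i j :
  (A *m tmx_perm s a) i j = A i (s^-1%g j) * Some (a (s^-1%g j)).
Proof.
rewrite mxE (bigD1 (s^-1%g j)) //= big1 => [|k kj]; first by rewrite mxE permKV eqxx addr0.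
rewrite mxE; case: eqP => [skj|_]; last by rewrite mulr0.
by rewrite -skj permK eqxx in kj.
Qed.

Lemma tmx_permM s t a b :
  tmx_perm s a *m tmx_perm t b = tmx_perm (s * t)%g (fun i => a i + b (s i)).
Proof. by apply/matrixP => i j; rewrite mul_tmx_perm !mxE permM; case: eqP. Qed.

Lemma tmx_perm1 a : (forall i, a i = 0) -> tmx_perm 1%g a = 1%:M.
Proof. by move=> a0; apply/matrixP => i j; rewrite !mxE perm1 a0; case: eqP. Qed.

Lemma tmx_perm_unit s a (q := tmx_perm s^-1%g (fun j => - a (s^-1%g j))) :
  tmx_perm s a *m q = 1%:M /\ q *m tmx_perm s a = 1%:M.
Proof.
rewrite !tmx_permM mulgV mulVg.
by split; apply: tmx_perm1 => i; rewrite ?permK ?addNr ?subrr.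
Qed.

End TropicalPermMatrix.

Section TropicalSpan.
Variable n : nat.
Local Notation V := 'cV[R]_n.
Local Notation vmax_shift := (fun q w => vmax (shiftv q) w).

Lemma shiftv_shift (u : V) a c : shiftv (shiftv (u, a), c) = shiftv (u, c + a).
Proof. by apply/matrixP => i k; rewrite !mxE /= addrA. Qed.

Lemma shiftv_vmax (u w : V) c :
  shiftv (vmax u w, c) = vmax (shiftv (u, c)) (shiftv (w, c)).
Proof. by apply/matrixP => i k; rewrite !mxE /= addr_maxr. Qed.

Lemma shiftv0 (u : V) : shiftv (u, 0) = u.
Proof. by apply/matrixP => i k; rewrite !mxE /= add0r (ord1 k). Qed.

Lemma vmaxA (u v w : V) : vmax u (vmax v w) = vmax (vmax u v) w.
Proof. by apply/matrixP => i k; rewrite !mxE maxA. Qed.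

Lemma shiftv_foldr (p : V * R) l c :
  shiftv (foldr vmax_shift (shiftv p) l, c) =
  foldr vmax_shift (shiftv (p.1, c + p.2)) (map (fun q => (q.1, c + q.2)) l).
Proof.
elim: l => [|q l IH] /=; first by case: p => u a; rewrite shiftv_shift.
by rewrite shiftv_vmax IH; case: q => u a; rewrite shiftv_shift.
Qed.

Lemma foldr_vmax (u w : V) l :
  foldr vmax_shift (vmax u w) l = vmax (foldr vmax_shift u l) w.
Proof. by elim: l => [|q l IH] //=; rewrite IH vmaxA. Qed.

Lemma tspan_base (P : V -> Prop) u : P u -> tspan P u.
Proof. by move=> Pu; exists (u, 0), [::]; rewrite shiftv0. Qed.

Lemma tspan_shift (P : V -> Prop) v c : tspan P v -> tspan P (shiftv (v, c)).
Proof.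
case=> p [l [Pp [Pl ->]]]; rewrite shiftv_foldr.
exists (p.1, c + p.2), (map (fun q => (q.1, c + q.2)) l).
split; first exact: Pp.
by split=> [q /mapP [q0 q0l ->]|]; first exact: Pl q0 q0l.
Qed.

Lemma tspan_vmax (P : V -> Prop) v w : tspan P v -> tspan P w -> tspan P (vmax v w).
Proof.
case=> p [l [Pp [Pl ->]]] [p' [l' [Pp' [Pl' ->]]]].
exists p', (l ++ p :: l'); split=> //; split.
  by move=> q; rewrite mem_cat in_cons => /orP[/Pl|/orP[/eqP->|/Pl']].
by rewrite foldr_cat /= foldr_vmax.
Qed.

Lemma tspan_sub (P Q : V -> Prop) v :
  (forall u, P u -> tspan Q u) -> tspan P v -> tspan Q v.
Proof.
move=> PQ [p [l [Pp [Pl ->]]]]; elim: l Pl => [|[u a] l IH] Pl /=.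
  by case: p Pp => u a /PQ /tspan_shift.
apply: tspan_vmax; last by apply: IH => q ql; apply: Pl; rewrite in_cons ql orbT.
by apply/tspan_shift/PQ/(Pl (u, a)); rewrite mem_head.
Qed.

Lemma tspan_mono (P Q : V -> Prop) v :
  (forall u, P u -> Q u) -> tspan P v -> tspan Q v.
Proof. by move=> PQ; apply: tspan_sub => u /PQ /tspan_base. Qed.

Lemma foldr_vmax_entry (p : V * R) l i :
  (forall q, q \in p :: l -> q.2 + q.1 i 0 <= foldr vmax_shift (shiftv p) l i 0) /\
  exists2 q, q \in p :: l & foldr vmax_shift (shiftv p) l i 0 = q.2 + q.1 i 0.
Proof.
elim: l => [|q' l [IHub [q0 q0in IHq]]] /=.
  split; last by exists p; rewrite ?mem_head ?mxE.
  by move=> q; rewrite mem_seq1 => /eqP ->; rewrite mxE.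
rewrite !mxE /=; split.
  move=> q; rewrite !in_cons => /or3P [/eqP->|/eqP->|ql].
  - by rewrite le_max IHub ?orbT // mem_head.
  - by rewrite le_max lexx.
  - by rewrite le_max IHub ?orbT // in_cons ql orbT.
case: leP => _; last by exists q'; rewrite // !in_cons eqxx orbT.
by exists q0 => //; move: q0in; rewrite !in_cons => /orP[->|->]; rewrite ?orbT.
Qed.

Lemma tspan_sup (P : V -> Prop) (L : seq (V * R)) (w : V) :
  L != [::] -> (forall q, q \in L -> P q.1) ->
  (forall i, (forall q, q \in L -> q.2 + q.1 i 0 <= w i 0) /\
             exists2 q, q \in L & w i 0 = q.2 + q.1 i 0) ->
  tspan P w.
Proof.
case: L => [//|p l] _ PL Hw; exists p, l; split; first exact/PL/mem_head.
split; first by move=> q ql; apply: PL; rewrite in_cons ql orbT.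
apply/matrixP => i k; rewrite (ord1 k).
have [wub [q ql wq]] := Hw i; have [fub [q' ql' fq]] := foldr_vmax_entry p l i.
apply/eqP; rewrite eq_le; apply/andP; split; first by rewrite wq fub.
by rewrite fq wub.
Qed.

End TropicalSpan.

Lemma tspan_mulmx m p (M : 'M[R]_(m, p)) (c : 'I_p -> T) (v : 'cV[R]_m)
    (i0 : 'I_m) :
  (forall i, Some (v i 0) = \sum_k (Some (M i k) : T) * c k) ->
  tspan (fun u => exists2 k, c k != 0 & u = col k M) v.
Proof.
move=> Hv; pose L := pmap (fun k => omap (pair (col k M)) (c k)) (enum 'I_p).
have memL q : q \in L -> exists2 k, c k = Some q.2 & q.1 = col k M.
  by rewrite mem_pmap => /mapP [k _]; case ck: (c k) => [a|] //= [->]; exists k.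
have inL k a : c k = Some a -> (col k M, a) \in L.
  by move=> ck; rewrite mem_pmap; apply/mapP; exists k; rewrite ?mem_enum ?ck.
have attained i : exists2 q, q \in L & v i 0 = q.2 + q.1 i 0.
  have [k] := sumT_attained (esym (Hv i)); case ck: (c k) => [a|] // [<-].
  by exists (col k M, a); rewrite ?inL // mxE addrC.
apply: (tspan_sup (L := L)).
- by have [q qL _] := attained i0; apply: contraTneq qL => ->.
- by move=> q /memL [k ck ->]; exists k; rewrite ?ck.
move=> i; split=> [q /memL [k ck ->]|]; last exact: attained.
by rewrite mxE addrC; apply: (sumT_ub (esym (Hv i)) (i := k)); rewrite ck.
Qed.

Lemma right_ideal_refl n (S : 'M[T]_n -> Prop) a : right_ideal S a a.
Proof. by exists (tmx_id R n); split; [right | rewrite tmx_mulE tmx_idE mulmx1]. Qed.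

Lemma left_ideal_refl n (S : 'M[T]_n -> Prop) a : left_ideal S a a.
Proof. by exists (tmx_id R n); split; [right | rewrite tmx_mulE tmx_idE mul1mx]. Qed.

Lemma right_idealE n (S : 'M[T]_n -> Prop) a e z : S e -> a *m e = a ->
  right_ideal S a z <-> exists2 x, S x & z = a *m x.
Proof.
move=> Se ae; split=> [[x [[Sx|->] ->]]|[x Sx ->]]; rewrite ?tmx_mulE ?tmx_idE.
- by exists x.
- by exists e; rewrite // mulmx1 ae.
- by exists x; split; [left | rewrite tmx_mulE].
Qed.

Lemma left_idealE n (S : 'M[T]_n -> Prop) a e z : S e -> e *m a = a ->
  left_ideal S a z <-> exists2 x, S x & z = x *m a.
Proof.
move=> Se ea; split=> [[x [[Sx|->] ->]]|[x Sx ->]]; rewrite ?tmx_mulE ?tmx_idE.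
- by exists x.
- by exists e; rewrite // mul1mx ea.
- by exists x; split; [left | rewrite tmx_mulE].
Qed.

Lemma H_class_unit_mul n (E G G' : 'M[T]_n) :
  tmx_finite E -> E *m E = E -> G *m G' = 1%:M -> G' *m G = 1%:M -> G *m E = E *m G ->
  H_class E (G *m E).
Proof.
move=> Ef idemE GG' G'G GE.
have [GEf _] := unit_mulmx_finite GG' G'G Ef.
have XE : G *m E *m E = G *m E by rewrite -mulmxA idemE.
have EX : E *m (G *m E) = G *m E by rewrite GE mulmxA idemE.
split=> //; split=> z.
  rewrite (right_idealE z Ef XE) (right_idealE z Ef idemE).
  split=> -[x xf ->].
    exists (G *m x); first exact: (unit_mulmx_finite GG' G'G xf).1.
    by rewrite GE -mulmxA.
  exists (G' *m x); first exact: (unit_mulmx_finite G'G GG' xf).1.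
  by rewrite GE -!mulmxA (mulmxA G) GG' mul1mx.
rewrite (left_idealE z Ef EX) (left_idealE z Ef idemE).
split=> -[x xf ->].
  by exists (x *m G); [exact: (unit_mulmx_finite GG' G'G xf).2 | rewrite mulmxA].
exists (x *m G'); first exact: (unit_mulmx_finite G'G GG' xf).2.
by rewrite mulmxA -(mulmxA x) G'G mulmx1.
Qed.

Lemma H_class_inverse n (E X : 'M[T]_n) : E *m E = E -> H_class E X ->
  exists Y, [/\ X *m Y = E, Y *m X = E, E *m X = X, X *m E = X & Y *m E = Y].
Proof.
move=> idemE [_ [XRE XLE]].
have [a [_ Xa]] := (XRE X).1 (right_ideal_refl _ _).
have [b [_ Eb]] := (XRE E).2 (right_ideal_refl _ _).
have [c [_ Xc]] := (XLE X).1 (left_ideal_refl _ _).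
have [d [_ Ed]] := (XLE E).2 (left_ideal_refl _ _).
move: Xa Eb Xc Ed; rewrite !tmx_mulE => Xa Eb Xc Ed.
have EX : E *m X = X by rewrite Xa mulmxA idemE.
have XE : X *m E = X by rewrite Xc -mulmxA idemE.
have Yd : E *m b = d *m E by rewrite {1}Ed -mulmxA -Eb.
exists (E *m b); split=> //.
- by rewrite mulmxA XE -Eb.
- by rewrite Yd -mulmxA EX -Ed.
- by rewrite Yd -mulmxA idemE.
Qed.

Lemma add1_tmx_of n (E : 'M[R]_n) :
  (forall j, 0 <= E j j) -> 1%:M + tmx_of E = tmx_of E.
Proof.
move=> E0; apply/matrixP => i j; rewrite !mxE; case: eqP => [->|_]; last by rewrite add0r.
by rewrite mulr1n taddE; congr Some; exact: max_r.
Qed.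

Section FullRank.
Variables (n : nat) (E : 'M[R]_n).
Hypothesis rankE : has_rank E n.
Local Notation Et := (tmx_of E).

Lemma full_rank_col_nonredundant j :
  ~ tspan (fun u => exists2 k, k != j & u = col k E) (col j E).
Proof.
move=> colj; have [_ rank_min] := rankE.
pose X := [seq col k E | k in predC1 j].
have genX : generates X (colspace E).
  move=> v; split; first by apply: tspan_mono => u /imageP [k _ ->]; exists k.
  apply: tspan_sub => u [k ->]; case: (eqVneq k j) => [->|kj].
    by apply: tspan_mono colj => w [k' k'j ->]; apply: image_f.
  by apply/tspan_base/image_f.
have := leq_trans (rank_min X genX) (size_undup X).
by rewrite size_image cardC1 card_ord leqNgt ltn_predL (leq_ltn_trans _ (ltn_ord j)).
Qed.

(* If [c j != 1], the [j]-th term lies strictly below column [j] (trop_absorb), so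
   dropping it expresses column [j] through the other columns. *)
Lemma full_rank_col_coef j (c : 'I_n -> T) :
  (forall i, Some (E i j) = \sum_k Et i k * c k) -> c j = 1.
Proof.
move=> colj; apply/eqP/negPn/negP => cj1.
apply: (full_rank_col_nonredundant (j := j)).
pose c' k := if k == j then 0 else c k.
suff colj' : forall i, Some (col j E i 0) = \sum_k (Some (E i k) : T) * c' k.
  apply: tspan_mono (tspan_mulmx j colj') => _ [k ck ->]; exists k => //.
  by apply: contraNneq ck => ->; rewrite /c' ifT.
move=> i; rewrite mxE (bigD1 j) //= {1}/c' eqxx mulr0 add0r.
move: (colj i); rewrite (bigD1 j) //= mxE => /trop_absorb <- //.
by apply: eq_bigr => k /negbTE kj; rewrite /c' kj mxE.
Qed.

Lemma full_rank_idem_diag : Et *m Et = Et -> forall j, E j j = 0.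
Proof.
move=> idemE j; suff : Et j j = 1 by rewrite /tmx_of mxE => -[].
apply: (full_rank_col_coef (c := fun k => Et k j)) => i.
by transitivity (Et i j); [rewrite mxE | rewrite -{1}idemE mxE].
Qed.

Lemma full_rank_col_shift a b r : (forall i, E i a = r + E i b) -> a = b.
Proof.
move=> Eab; pose c k := if k == b then Some r : T else 0.
have : c a = 1.
  apply: full_rank_col_coef => i; rewrite (bigD1 b) //= big1 => [|k /negbTE kb].
    by rewrite /c ifT // addr0 mxE Eab addrC.
  by rewrite /c kb mulr0.
by rewrite /c; case: (eqVneq a b) => // _ /eqP; rewrite eq_sym oner_eq0.
Qed.

Lemma full_rank_fix_unit (K K' : 'M[T]_n) :
  K *m K' = 1%:M -> K' *m K = 1%:M -> Et *m K = Et -> K = 1%:M.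
Proof.
move=> KK' K'K EK; have Kjj j : K j j = 1.
  apply: (full_rank_col_coef (c := fun k => K k j)) => i.
  by transitivity (Et i j); [rewrite mxE | rewrite -{1}EK mxE].
apply/matrixP => i j; rewrite mxE; case: (eqVneq i j) => [->|ij]; first by rewrite Kjj.
apply/eqP; apply: contraNT ij => Kij; apply/eqP.
by apply: (unit_col_uniq KK' K'K Kij); rewrite Kjj oner_eq0.
Qed.

(* [(X Y) j j = E j j = 0] is attained at some [k], and column [k] of [X] is then
   column [j] of [E] shifted by [X j k]. *)
Lemma full_rank_right_perm (X Y : 'M[T]_n) :
  Et *m Et = Et -> tmx_finite X -> X *m Y = Et -> Et *m X = X ->
  exists s a, X = Et *m tmx_perm s a.
Proof.
move=> idemE /tmx_finiteP [M ->] XY EX.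
have col_shift j : exists k, forall i, M i k = E i j + M j k.
  have : (tmx_of M *m Y) j j = Some 0 by rewrite XY mxE full_rank_idem_diag.
  rewrite mxE => /sumT_attained [k]; rewrite mxE.
  case Ykj: (Y k j) => [b|] // [Mb]; exists k => i.
  have ub : M i k + b <= E i j.
    have XYij : (tmx_of M *m Y) i j = Some (E i j) by rewrite XY mxE.
    by apply: (mulmx_entry_ub (k := k) XYij); rewrite mxE Ykj.
  have lb : E i j + M j k <= M i k.
    have EXik : (Et *m tmx_of M) i k = Some (M i k) by rewrite EX mxE.
    by apply: (mulmx_entry_ub (k := j) EXik); rewrite !mxE.
  lra.
have [phi Mphi] := fin_all_exists col_shift.
have phi_inj : injective phi.
  move=> j j' phij; apply: (full_rank_col_shift (r := M j' (phi j') - M j (phi j))) => i.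
  by move: (Mphi j i) (Mphi j' i); rewrite phij; lra.
exists (perm phi_inj), (fun j => M j (phi j)).
apply/matrixP => i k; rewrite mulmx_tmx_perm; set j := (perm phi_inj)^-1%g k.
have -> : k = phi j by rewrite -[k](permKV (perm phi_inj)) permE.
by rewrite !mxE Mphi.
Qed.

Lemma full_rank_H_class_perm (X : 'M[T]_n) : Et *m Et = Et -> H_class Et X ->
  exists s a, tmx_perm s a *m Et = Et *m tmx_perm s a /\ Et *m tmx_perm s a = X.
Proof.
move=> idemE HX; have [Y [XY YX EX XE YE]] := H_class_inverse idemE HX.
have [s [a Xsa]] := full_rank_right_perm idemE HX.1 XY EX.
have [PQ QP] := tmx_perm_unit s a.
set P := tmx_perm s a in Xsa PQ QP *; set Q := tmx_perm _ _ in PQ QP.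
have YQ : Y = Et *m Q by rewrite -[Y]mulmx1 -PQ mulmxA -YE -(mulmxA Y) -Xsa YX.
exists s, a; split; last by rewrite Xsa.
apply: (commr_unit_absorb (q := Q)); rewrite -?mulmxE //.
- by rewrite add1_tmx_of // => j; rewrite full_rank_idem_diag.
- by rewrite -Xsa XE.
- by rewrite -YQ YE.
Qed.

Lemma full_rank_comm_unit_inj (G1 G1' G2 G2' : 'M[T]_n) :
  G1 *m G1' = 1%:M -> G1' *m G1 = 1%:M -> G2 *m G2' = 1%:M -> G2' *m G2 = 1%:M ->
  G1 *m Et = Et *m G1 -> G2 *m Et = Et *m G2 -> G1 *m Et = G2 *m Et -> G1 = G2.
Proof.
move=> G1G1' G1'G1 G2G2' G2'G2 G1E G2E G12E.
have G2'E : G2' *m Et = Et *m G2' by apply: (commr_inv (A := 'M[T]_n)) G2G2' G2'G2 G2E.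
have EK : Et *m (G2' *m G1) = Et.
  by rewrite mulmxA -G2'E -mulmxA -G1E G12E mulmxA G2'G2 mul1mx.
have K1 : G2' *m G1 = 1%:M.
  apply: (full_rank_fix_unit (K' := G1' *m G2)) EK.
    by rewrite mulmxA -(mulmxA G2') G1G1' mulmx1 G2'G2.
  by rewrite mulmxA -(mulmxA G1') G2G2' mulmx1 G1'G1.
by rewrite -[G1]mul1mx -G2G2' -mulmxA K1 mulmx1.
Qed.

End FullRank.

End TropicalSemiring.

Unset Implicit Arguments.
Set Strict Implicit.

Theorem theorem7p3 (R : realType) (n : nat) (E : 'M[R]_n) :
  tmx_mul (tmx_of E) (tmx_of E) = tmx_of E ->
  has_rank E n ->
  let Et := tmx_of E in
  let G_E := fun G : 'M[trop R]_n => tmx_unit G /\ tmx_mul G Et = tmx_mul Et G in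
  (forall G, G_E G -> H_class Et (tmx_mul G Et)) /\
  (forall G1 G2, G_E G1 -> G_E G2 ->
     tmx_mul (tmx_mul G1 G2) Et = tmx_mul (tmx_mul G1 Et) (tmx_mul G2 Et)) /\
  (forall G1 G2, G_E G1 -> G_E G2 -> tmx_mul G1 Et = tmx_mul G2 Et -> G1 = G2) /\
  (forall X, H_class Et X -> exists G, G_E G /\ tmx_mul G Et = X).
Proof.
move=> idemE rankE Et G_E; rewrite tmx_mulE in idemE.
have Etf : tmx_finite Et by move=> i j; rewrite mxE.
have unitP G : tmx_unit G -> exists2 G', G *m G' = 1%:M & G' *m G = 1%:M.
  by case=> G' []; rewrite !tmx_mulE tmx_idE; exists G'.
split; [|split; [|split]].
- move=> G [/unitP [G' GG' G'G]]; rewrite !tmx_mulE => GE.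
  exact: H_class_unit_mul Etf idemE GG' G'G GE.
- move=> G1 G2 _ [_]; rewrite !tmx_mulE => G2E.
  by rewrite !mulmxA -(mulmxA G1 Et G2) -G2E !mulmxA -[RHS]mulmxA idemE.
- move=> G1 G2 [/unitP [G1' G1G1' G1'G1] +] [/unitP [G2' G2G2' G2'G2] +].
  by rewrite !tmx_mulE; apply: (full_rank_comm_unit_inj rankE G1G1' G1'G1 G2G2' G2'G2).
move=> X HX; have [s [a [PE EP]]] := full_rank_H_class_perm rankE idemE HX.
have [PQ QP] := tmx_perm_unit s a.
exists (tmx_perm s a); split; last by rewrite tmx_mulE PE.
split; last by rewrite !tmx_mulE.
by eexists; rewrite !tmx_mulE tmx_idE; split; [exact: PQ | exact: QP].
Qed.
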